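(* Let $q$ be a prime power, $V$ a $v$-dimensional vector space over $\mathrm{GF}(q)$, $\mathcal{G}$ a $(g-1)$-spread of $V$, and let $G$ be a subgroup of the stabilizer of $\mathcal{G}$ in $\mathrm{P\Gamma L}(v,q)$ (acting on the subspaces of $V$). Suppose $G$ acts transitively on the set of $2$-dimensional subspaces of $V$ that are not contained in any element of $\mathcal{G}$. Let $k\ge 2$ and let $\mathcal{B}$ be any union of $G$-orbits on the set of $k$-dimensional subspaces of $V$ that are scattered with respect to $\mathcal{G}$. Then there is an integer $\lambda$ such that every $2$-dimensional subspace of $V$ not contained in any element of $\mathcal{G}$ is contained in exactly $\lambda$ elements of $\mathcal{B}$; that is, $(V,\mathcal{G},\mathcal{B})$ is a $(v,g,k,\lambda)_q$-GDD for a suitable value $\lambda$.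
   Context: A $(g-1)$-spread of $V$ is a set of $g$-dimensional subspaces of $V$ such that every $1$-dimensional subspace of $V$ lies in exactly one of them. A subspace $B\le V$ is scattered with respect to $\mathcal{G}$ if $B$ contains no $2$-dimensional subspace contained in an element of $\mathcal{G}$. A $(v,g,k,\lambda)_q$-GDD is a triple $(V,\mathcal{G},\mathcal{B})$ with $V$ a $v$-dimensional $\mathrm{GF}(q)$-space, $\mathcal{G}$ a $(g-1)$-spread of $V$ with $\#\mathcal{G}>1$, $\mathcal{B}$ a set of $k$-dimensional subspaces of $V$, such that every $2$-dimensional subspace of $V$ is either contained in an element of $\mathcal{G}$ and in no element of $\mathcal{B}$, or in no element of $\mathcal{G}$ and in exactly $\lambda$ elements of $\mathcal{B}$. *)

From HB Require Import structures.
From mathcomp Require Import all_boot all_order all_algebra all_field.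
Set Implicit Arguments. Unset Strict Implicit. Unset Printing Implicit Defensive.
Import GRing.Theory.
Local Open Scope ring_scope.

Section Defs.
Variables (F : fieldType) (vT : vectType F).

Definition is_semilinear_map (f : vT -> vT) : Prop :=
  exists sigma : {rmorphism F -> F},
    bijective sigma /\ forall (a : F) (x y : vT), f (a *: x + y) = sigma a *: f x + f y.

Definition maps_onto (f : vT -> vT) (U W : {vspace vT}) : Prop :=
  forall y, y \in W <-> exists2 x, x \in U & f x = y.

(* S is a (g-1)-spread: a set of g-dimensional subspaces such that every
   1-dimensional subspace lies in exactly one of them *)
Definition is_spread (g : nat) (S : {vspace vT} -> Prop) : Prop :=
  (forall X, S X -> \dim X = g) /\
  (forall P : {vspace vT}, \dim P = 1%N -> exists! X, S X /\ (P <= X)%VS).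

Definition in_spread_elt (S : {vspace vT} -> Prop) (L : {vspace vT}) : Prop :=
  exists X, S X /\ (L <= X)%VS.

Definition scattered (S : {vspace vT} -> Prop) (U : {vspace vT}) : Prop :=
  forall L : {vspace vT}, (L <= U)%VS -> \dim L = 2%N -> ~ in_spread_elt S L.

Definition count_exactly (P : {vspace vT} -> Prop) (lam : nat) : Prop :=
  exists s : seq {vspace vT}, [/\ uniq s, size s = lam & forall X, X \in s <-> P X].

Definition gdd_blocks (S B : {vspace vT} -> Prop) (lam : nat) : Prop :=
  forall L : {vspace vT}, \dim L = 2%N ->
    (in_spread_elt S L -> forall X, B X -> ~ (L <= X)%VS) /\
    (~ in_spread_elt S L -> count_exactly (fun X => B X /\ (L <= X)%VS) lam).

End Defs.

(** A semilinear bijection f maps subspaces to subspaces injectively and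
    preserves inclusion, so if f preserves B and maps the line L1 onto L2, the
    blocks through L1 are mapped injectively into the blocks through L2.
    Transitivity on the lines outside the spread then gives equal numbers of
    blocks through any two such lines, which is the index lam.  Lines inside
    a spread element lie in no block because blocks are scattered. *)

From HB Require Import structures.
From mathcomp Require Import all_boot all_order all_algebra all_field.
From Stdlib Require Import Classical ClassicalEpsilon.
Set Implicit Arguments.
Unset Strict Implicit.
Local Open Scope ring_scope.
Import GRing.Theory VectorInternalTheory.

Section Semilinear.
Variables (F : fieldType) (vT : vectType F) (f : vT -> vT) (sigma : {rmorphism F -> F}).
Hypothesis f_semilinear : forall (a : F) (x y : vT), f (a *: x + y) = sigma a *: f x + f y.

Lemma semilinear0 : f 0 = 0.
Proof.
have := f_semilinear 1 0 0; rewrite scaler0 addr0 rmorph1 scale1r => f00.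
by apply: (addrI (f 0)); rewrite addr0 -f00.
Qed.

Lemma semilinearD x y : f (x + y) = f x + f y.
Proof. by have := f_semilinear 1 x y; rewrite rmorph1 !scale1r. Qed.

Lemma semilinearZ a x : f (a *: x) = sigma a *: f x.
Proof. by have := f_semilinear a x 0; rewrite !addr0 semilinear0 addr0. Qed.

Lemma semilinear_sum n (c : 'I_n -> F) (u : 'I_n -> vT) :
  f (\sum_i c i *: u i) = \sum_i sigma (c i) *: f (u i).
Proof.
apply: (big_ind2 (fun a b => f a = b)); first exact: semilinear0.
  by move=> x1 x2 y1 y2 <- <-; rewrite semilinearD.
by move=> i _; rewrite semilinearZ.
Qed.

End Semilinear.

Section SemilinearImage.
Variables (F : fieldType) (vT : vectType F).

Definition vspace_image (f : vT -> vT) (X : {vspace vT}) : {vspace vT} :=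
  <<map f (vbasis X)>>%VS.

Lemma vspace_imageP f X : is_semilinear_map f -> maps_onto f X (vspace_image f X).
Proof.
case=> sigma [[g sigmaK gK] f_sl] y; split.
- move=> y_img; pose fX := map_tuple f (vbasis X).
  rewrite (coord_span (X := fX) y_img).
  exists (\sum_i g (coord fX i y) *: (vbasis X)`_i).
    apply: memv_suml => i _; apply/memvZ/vbasis_mem.
    by apply: mem_nth; rewrite size_tuple.
  rewrite (semilinear_sum f_sl); apply: eq_bigr => i _.
  by rewrite gK /fX /= (nth_map 0) // size_tuple.
- case=> x xX <-; rewrite (coord_vbasis xX) (semilinear_sum f_sl).
  apply: memv_suml => i _; apply/memvZ/memv_span.
  by rewrite -(nth_map _ 0) ?size_tuple // mem_nth // size_map size_tuple.
Qed.

Lemma vspace_image_inj f :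
  is_semilinear_map f -> injective f -> injective (vspace_image f).
Proof.
move=> f_sl f_inj.
suff sub Y1 Y2 : vspace_image f Y1 = vspace_image f Y2 -> (Y1 <= Y2)%VS.
  by move=> X1 X2 eqX; apply: subv_anti; rewrite !sub.
move=> eqY; apply/subvP => x xY1.
have : f x \in vspace_image f Y1 by apply/(vspace_imageP Y1 f_sl); exists x.
by rewrite eqY => /(vspace_imageP Y2 f_sl) [x' x'Y2 /f_inj <-].
Qed.

Lemma maps_onto_subv f (L L' X X' : {vspace vT}) :
  maps_onto f L L' -> maps_onto f X X' -> (L <= X)%VS -> (L' <= X')%VS.
Proof.
move=> fL fX /subvP LX; apply/subvP => _ /fL [x xL <-].
by apply/fX; exists x; rewrite ?LX.
Qed.

End SemilinearImage.

Section Counting.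
Variables (F : fieldType) (vT : vectType F).

Lemma count_exactly_leq (P Q : {vspace vT} -> Prop) (h : {vspace vT} -> {vspace vT}) m n :
  injective h -> (forall X, P X -> Q (h X)) ->
  count_exactly P m -> count_exactly Q n -> (m <= n)%N.
Proof.
move=> h_inj PQ [sP [uP <- memP]] [sQ [uQ <- memQ]].
rewrite -(size_map h); apply: uniq_leq_size; first by rewrite map_inj_uniq.
by move=> _ /mapP [X /memP PX ->]; apply/memQ/PQ.
Qed.

End Counting.

(* Every subspace is [mx2vs] of one of the finitely many matrices over F. *)
Lemma count_exactly_exists (F : finFieldType) (vT : vectType F) (P : {vspace vT} -> Prop) :
  exists n, count_exactly P n.
Proof.
pose Pb X : bool := if excluded_middle_informative (P X) then true else false.
pose s := undup [seq X <- map mx2vs (enum 'M[F]_(dim vT)) | Pb X].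
exists (size s), s; split=> //; first exact: undup_uniq.
move=> X; rewrite mem_undup mem_filter /Pb.
case: excluded_middle_informative => //= PX; split=> // _.
by rewrite -[X]vs2mxK map_f ?mem_enum.
Qed.

Section Blocks.
Variables (F : fieldType) (vT : vectType F) (S B : {vspace vT} -> Prop).

Definition blocks_through (L : {vspace vT}) (X : {vspace vT}) : Prop :=
  B X /\ (L <= X)%VS.

Lemma blocks_through_leq f L1 L2 m n :
  is_semilinear_map f -> injective f ->
  (forall X W, B X -> maps_onto f X W -> B W) -> maps_onto f L1 L2 ->
  count_exactly (blocks_through L1) m -> count_exactly (blocks_through L2) n ->
  (m <= n)%N.
Proof.
move=> f_sl f_inj fB fL; apply: count_exactly_leq (vspace_image_inj f_sl f_inj) _.
move=> X [BX L1X]; have fX := vspace_imageP X f_sl.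
by split; [apply: fB fX | apply: maps_onto_subv fL fX L1X].
Qed.

Lemma scattered_blocks_avoid_spread :
  (forall X, B X -> scattered S X) ->
  forall L, \dim L = 2%N -> in_spread_elt S L -> forall X, B X -> ~ (L <= X)%VS.
Proof. by move=> B_sc L dimL LS X BX LX; apply: B_sc BX L LX dimL LS. Qed.

Variable Gp : (vT -> vT) -> Prop.
Hypothesis Gp_semilinear : forall f, Gp f -> is_semilinear_map f /\ bijective f.
Hypothesis Gp_transitive : forall L1 L2 : {vspace vT}, \dim L1 = 2%N -> \dim L2 = 2%N ->
  ~ in_spread_elt S L1 -> ~ in_spread_elt S L2 -> exists f, Gp f /\ maps_onto f L1 L2.
Hypothesis Gp_blocks : forall f X W, Gp f -> B X -> maps_onto f X W -> B W.

Lemma transitive_blocks_through_leq L1 L2 m n :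
  \dim L1 = 2%N -> \dim L2 = 2%N -> ~ in_spread_elt S L1 -> ~ in_spread_elt S L2 ->
  count_exactly (blocks_through L1) m -> count_exactly (blocks_through L2) n ->
  (m <= n)%N.
Proof.
move=> dim1 dim2 L1S L2S; have [f [Gf fL]] := Gp_transitive dim1 dim2 L1S L2S.
have [f_sl /bij_inj f_inj] := Gp_semilinear Gf.
by apply: blocks_through_leq f_sl f_inj _ fL => X W; apply: Gp_blocks.
Qed.

Lemma transitive_blocks_through_eq L1 L2 m n :
  \dim L1 = 2%N -> \dim L2 = 2%N -> ~ in_spread_elt S L1 -> ~ in_spread_elt S L2 ->
  count_exactly (blocks_through L1) m -> count_exactly (blocks_through L2) n ->
  m = n.
Proof.
move=> dim1 dim2 L1S L2S cnt1 cnt2; apply/eqP; rewrite eqn_leq.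
by rewrite (transitive_blocks_through_leq dim1 dim2) // (transitive_blocks_through_leq dim2 dim1).
Qed.

End Blocks.

Unset Implicit Arguments.

Theorem lemma11 (F : finFieldType) (v g k : nat)
  (S : {vspace 'rV[F]_v} -> Prop)
  (Gp : ('rV[F]_v -> 'rV[F]_v) -> Prop)
  (B : {vspace 'rV[F]_v} -> Prop) :
  is_spread g S ->
  (* Gp is a group of semilinear bijections (the preimage in GammaL(v,q) of
     the subgroup G of PGammaL(v,q)) *)
  (forall f, Gp f -> is_semilinear_map f /\ bijective f) ->
  Gp id ->
  (forall f h, Gp f -> Gp h -> Gp (f \o h)) ->
  (forall f, Gp f -> exists h, [/\ Gp h, cancel f h & cancel h f]) ->
  (* G stabilizes the spread *)
  (forall f X W, Gp f -> maps_onto f X W -> S X -> S W) ->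
  (* G is transitive on the 2-subspaces not contained in a spread element *)
  (forall L1 L2 : {vspace 'rV[F]_v}, \dim L1 = 2%N -> \dim L2 = 2%N ->
     ~ in_spread_elt S L1 -> ~ in_spread_elt S L2 ->
     exists f, Gp f /\ maps_onto f L1 L2) ->
  (2 <= k)%N ->
  (* B is a union of G-orbits on the scattered k-subspaces *)
  (forall X, B X -> \dim X = k /\ scattered S X) ->
  (forall f X W, Gp f -> B X -> maps_onto f X W -> B W) ->
  exists lam : nat, gdd_blocks S B lam.
Proof.
move=> _ Gp_sl _ _ _ _ Gp_tr _ B_dim_sc Gp_B.
have B_sc X : B X -> scattered S X by case/B_dim_sc.
have avoid := scattered_blocks_avoid_spread B_sc.
have [[L0 [dim0 L0S]] | no_line] :=
  classic (exists L0 : {vspace 'rV[F]_v}, \dim L0 = 2%N /\ ~ in_spread_elt S L0).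
- have [lam cnt0] := count_exactly_exists (blocks_through B L0).
  exists lam => L dimL; split=> [|LS]; first exact: avoid.
  have [n cnt] := count_exactly_exists (blocks_through B L).
  by rewrite (transitive_blocks_through_eq Gp_sl Gp_tr Gp_B dim0 dimL L0S LS cnt0 cnt).
- exists 0%N => L dimL; split=> [|LS]; first exact: avoid.
  by case: no_line; exists L.
Qed.
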